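(* Let $L$ be a finite lattice, let $\varphi$ be a capacity on $L$ and $\psi$ a completely monotone capacity on $L$ with Möbius inverse $f_\psi$. Let $\mathcal P$ be the set of probability mass functions $p$ on $\mathcal L\times L$ with $\sum_{(V,y):x\in V}p(V,y)=\varphi(x)$ and $\sum_{(V,y):y\le z}p(V,y)=\psi(z)$ for all $x,z\in L$. For $w\in R(\mathcal L\times L)$ define $B^{(\varphi,\psi)}(w)=\max_{p\in\mathcal P}\sum_{(V,y)}p(V,y)w(V,y)$ and $$S_{(\varphi,\psi)}(w)=\min\Big\{\psi(h)-S^\varphi(g):\ (g,h)\in R(\mathcal L)\times R(L),\ w(V,y)\le h(y)-g(V)\ \forall (V,y)\in\mathcal L\times L\Big\},$$ where $\psi(h)=\sum_{y\in L}f_\psi(y)h(y)$ and $S^\varphi(g)=\max\{\sum_{x\in L}r_x\varphi(x): \sum_{x\in V}r_x\le g(V)\ \forall V\in\mathcal L\}$. Then $B^{(\varphi,\psi)}(w)=S_{(\varphi,\psi)}(w)$ for every $w\in R(\mathcal L\times L)$.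
   Context: $L$ is a finite lattice with minimum $\hat0$, maximum $\hat1$, meet $\wedge$. A capacity on $L$ is a monotone $\varphi$ with $\varphi(\hat0)=0$, $\varphi(\hat1)=1$. Completely monotone: all iterated differences $\nabla_a\varphi(x)=\varphi(x)-\varphi(x\wedge a)$ are nonnegative; the Möbius inverse $f_\psi$ of $\psi$ is the unique function with $\psi(z)=\sum_{y\le z}f_\psi(y)$ (it is a probability mass function when $\psi$ is a completely monotone capacity). $\mathcal L$ is the set of nonempty up-sets of $L$ (subsets $U$ with $x\in U,x\le y\Rightarrow y\in U$). $R(S)$ denotes real-valued functions on a finite set $S$. In probabilistic terms, $p\in\mathcal P$ is the joint law of a pair $(\mathcal X,Y)$ with $\mathbb P(x\in\mathcal X)=\varphi(x)$ and $\mathbb P(Y\le z)=\psi(z)$. *)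

From HB Require Import structures.
From mathcomp Require Import all_boot all_order all_algebra.
Set Implicit Arguments. Unset Strict Implicit. Unset Printing Implicit Defensive.
Import Order.Theory GRing.Theory Num.Theory.

Section Defs.
Context {d : Order.disp_t} (L : finTBLatticeType d).

Definition is_upset (U : {set L}) : bool :=
  [forall x : L, forall y : L, ((x \in U) && (x <= y)%O) ==> (y \in U)].

(* \mathcal L : the nonempty up-sets of L, as a finite type *)
Definition nupset : Type := {U : {set L} | (U != set0) && is_upset U}.
HB.instance Definition _ := Finite.on nupset.

Context {R : realFieldType}.
Local Open Scope ring_scope.

Definition capacity (phi : L -> R) : Prop :=
  [/\ forall x y : L, (x <= y)%O -> phi x <= phi y,
      phi \bot%O = 0 & phi \top%O = 1].

Definition nabla (a : L) (f : L -> R) : L -> R := fun x => f x - f (Order.meet x a).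

Definition iter_nabla (s : seq L) (f : L -> R) : L -> R := foldr nabla f s.

Definition completely_monotone (psi : L -> R) : Prop :=
  forall (s : seq L) (x : L), 0 <= iter_nabla s psi x.

Definition moebius_inverse (psi f : L -> R) : Prop :=
  forall z : L, psi z = \sum_(y : L | (y <= z)%O) f y.

Definition coupling (phi psi : L -> R) (p : nupset -> L -> R) : Prop :=
  [/\ forall V y, 0 <= p V y,
      \sum_(V : nupset) \sum_(y : L) p V y = 1,
      forall x : L, \sum_(V : nupset | x \in sval V) \sum_(y : L) p V y = phi x
    & forall z : L, \sum_(V : nupset) \sum_(y : L | (y <= z)%O) p V y = psi z].

Definition is_max (E : R -> Prop) (v : R) : Prop := E v /\ forall u, E u -> u <= v.
Definition is_min (E : R -> Prop) (v : R) : Prop := E v /\ forall u, E u -> v <= u.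

Definition B_values (phi psi : L -> R) (w : nupset -> L -> R) : R -> Prop :=
  fun v => exists p, coupling phi psi p /\
    v = \sum_(V : nupset) \sum_(y : L) p V y * w V y.

Definition Sphi_values (phi : L -> R) (g : nupset -> R) : R -> Prop :=
  fun v => exists r : L -> R,
    (forall V : nupset, \sum_(x in sval V) r x <= g V) /\
    v = \sum_(x : L) r x * phi x.

Definition psi_int (fpsi h : L -> R) : R := \sum_(y : L) fpsi y * h y.

Definition S_values (phi fpsi : L -> R) (w : nupset -> L -> R) : R -> Prop :=
  fun v => exists (g : nupset -> R) (h : L -> R) (s : R),
    (forall (V : nupset) (y : L), w V y <= h y - g V) /\
    is_max (Sphi_values phi g) s /\
    v = psi_int fpsi h - s.

End Defs.

From HB Require Import structures.
From mathcomp Require Import all_boot all_order all_algebra.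
From mathcomp Require Import ring lra.
Set Implicit Arguments. Unset Strict Implicit. Unset Printing Implicit Defensive.
Import Order.Theory GRing.Theory Num.Theory.
Local Open Scope ring_scope.

(* Both sides are optimal values of a pair of dual finite linear programs.
   Since [psi] is completely monotone its Moebius inverse [fpsi] is
   nonnegative, and a coupling is then exactly a nonnegative [p] on
   [nupset L * L] whose second marginal is [fpsi] and whose first marginal
   puts mass [phi x] on the up-sets containing [x].  The LP dual of maximizing
   [sum p w] over such [p] is minimizing [psi(h) - sum_x r x * phi x] subject
   to [w V y <= h y - g V] and [sum_(x in V) r x <= g V], which is
   [S_(phi,psi)(w)] once the inner maximum [S^phi(g)] is taken.  Strong
   duality, proved from Fourier-Motzkin elimination over any ordered field,
   closes the gap as soon as both programs are feasible; for the coupling side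
   take [q V * fpsi y], where [q] is the law of a random up-set with
   [P(x \in X) = phi x]: it exists by Farkas' lemma because, by a layer-cake
   decomposition, [sum_x r x * phi x <= 0] whenever [r] has nonpositive sum on
   every nonempty up-set and [phi] is monotone and nonnegative. *)

Section LinearProgramming.
Variable R : realFieldType.

Lemma sum_delta_mull (I : finType) (p : I) (c : R) (F : I -> R) :
  \sum_i (if i == p then c else 0) * F i = c * F p.
Proof.
rewrite (bigD1 p) //= eqxx big1 ?addr0 // => i /negbTE ->; exact: mul0r.
Qed.

Lemma sum_delta_mulr (I : finType) (p : I) (c : R) (F : I -> R) :
  \sum_i F i * (if p == i then c else 0) = F p * c.
Proof.
rewrite (bigD1 p) //= eqxx big1 ?addr0 // => i.
by rewrite eq_sym => /negbTE ->; rewrite mulr0.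
Qed.

Lemma sum_mulr0 (I : Type) (r : seq I) (P : pred I) (F : I -> R) :
  \sum_(i <- r | P i) F i * 0 = 0.
Proof. by rewrite big1 // => i _; rewrite mulr0. Qed.

Lemma sum_mul0r (I : Type) (r : seq I) (P : pred I) (F : I -> R) :
  \sum_(i <- r | P i) 0 * F i = 0.
Proof. by rewrite big1 // => i _; rewrite mul0r. Qed.

Lemma sum_mulC (I : finType) (F G : I -> R) : \sum_i F i * G i = \sum_i G i * F i.
Proof. by apply: eq_bigr => i _; rewrite mulrC. Qed.

Lemma sum_pair (I J : finType) (F : I * J -> R) : \sum_p F p = \sum_i \sum_j F (i, j).
Proof. by rewrite pair_bigA; apply: eq_bigr => -[]. Qed.

Lemma sum_bilinear (I J : finType) (y : I -> R) (A : I -> J -> R) (x : J -> R) :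
  \sum_j (\sum_i y i * A i j) * x j = \sum_i y i * \sum_j A i j * x j.
Proof.
under eq_bigr do rewrite big_distrl /=.
rewrite exchange_big; apply: eq_bigr => i _; rewrite big_distrr.
by apply: eq_bigr => j _; rewrite /= mulrA.
Qed.

Lemma solve_one_variable (I : finType) (a r : I -> R) :
  (forall i, a i = 0 -> 0 <= r i) ->
  (forall p k, 0 < a p -> a k < 0 -> 0 <= - a k * r p + a p * r k) ->
  exists t, forall i, a i * t <= r i.
Proof.
move=> hzero hpair; pose u i := r i / a i.
have ru i : a i != 0 -> r i = u i * a i by move=> hi; rewrite /u divfK.
have hsep p k : 0 < a p -> a k < 0 -> u k <= u p.
  move=> hp hk; have := hpair p k hp hk.
  rewrite (ru p) ?gt_eqF // (ru k) ?lt_eqF // => H.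
  have : 0 <= (a p * - a k) * (u p - u k).
    by rewrite (_ : _ * _ = - a k * (u p * a p) + a p * (u k * a k)) //; ring.
  by rewrite pmulr_rge0 ?subr_ge0 // mulr_gt0 // oppr_gt0.
case: (boolP [exists k, a k < 0]) => [/existsP[k0 hk0]|/existsPn hneg].
  have [km hkm hmax] := @arg_maxP _ _ _ k0 (fun k => a k < 0) u hk0.
  exists (u km) => i; case: (ltgtP (a i) 0) => hi.
  - by rewrite (ru i) ?lt_eqF //; have /= := hmax i hi; nra.
  - by rewrite (ru i) ?gt_eqF //; have := hsep i km hi hkm; nra.
  - by rewrite hi mul0r; apply: hzero.
exists (- \sum_i `|u i|) => i; case: (ltgtP (a i) 0) => hi.
- by have := hneg i; rewrite hi.
- suff : - \sum_j `|u j| <= u i by rewrite (ru i) ?gt_eqF //; nra.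
  apply: (@le_trans _ _ (- `|u i|)); last by rewrite lerNl -normrN ler_norm.
  by rewrite lerN2 (bigD1 i) //= lerDl; exact: sumr_ge0.
- by rewrite hi mul0r; apply: hzero.
Qed.

(* The rows of the Fourier-Motzkin system eliminating the variable of
   coefficients [a]: each row [i0] with [a i0 = 0], and each combination
   [- a k * row p + a p * row k] with [a p > 0 > a k]. *)
Definition fm_row (I : finType) (a : I -> R) (i' : I + I * I) (i : I) : R :=
  match i' with
  | inl i0 => if (a i0 == 0) && (i == i0) then 1 else 0
  | inr (p, k) => if (0 < a p) && (a k < 0) then
       (if i == p then - a k else 0) + (if i == k then a p else 0) else 0
  end.

Lemma fm_row_ge0 (I : finType) (a : I -> R) i' i : 0 <= fm_row a i' i.
Proof.
case: i' => [i0|[p k]] /=; first by case: ifP.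
case: ifP => // /andP[ap ak]; apply: addr_ge0; case: ifP => // _.
  by rewrite oppr_ge0 ltW.
by rewrite ltW.
Qed.

Lemma fm_row_inl (I : finType) (a : I -> R) i0 (F : I -> R) :
  \sum_i fm_row a (inl i0) i * F i = if a i0 == 0 then F i0 else 0.
Proof.
rewrite /fm_row; case: ifP => h; last by rewrite big1 // => i _; rewrite mul0r.
by rewrite -[RHS]mul1r -(sum_delta_mull i0); apply: eq_bigr => i _.
Qed.

Lemma fm_row_inr (I : finType) (a : I -> R) p k (F : I -> R) :
  \sum_i fm_row a (inr (p, k)) i * F i =
  if (0 < a p) && (a k < 0) then - a k * F p + a p * F k else 0.
Proof.
rewrite /fm_row; case: ifP => h; last by rewrite big1 // => i _; rewrite mul0r.
by under eq_bigr do rewrite mulrDl; rewrite big_split /= !sum_delta_mull.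
Qed.

Lemma fm_row_eliminates (I : finType) (a : I -> R) i' : \sum_i fm_row a i' i * a i = 0.
Proof.
case: i' => [i0|[p k]]; first by rewrite fm_row_inl; case: eqP.
by rewrite fm_row_inr; case: ifP => // _; ring.
Qed.

Lemma fourier_motzkin n (I : finType) (A : I -> nat -> R) (b : I -> R) :
  (exists x : nat -> R, forall i, \sum_(j < n) A i j * x j <= b i) \/
  (exists l, [/\ forall i, 0 <= l i, forall j, (j < n)%N -> \sum_i l i * A i j = 0
     & \sum_i l i * b i < 0]).
Proof.
elim: n I A b => [|n IH] I A b.
  case: (boolP [exists i, b i < 0]) => [/existsP[i0 hi0]|/existsPn hb].
    right; exists (fun i => if i == i0 then 1 else 0); split => //.
    - by move=> i; case: ifP.
    - by rewrite sum_delta_mull mul1r.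
  left; exists (fun _ => 0) => i; rewrite big_ord0.
  by have := hb i; rewrite -leNgt.
pose a i := A i n; pose comb (F : I -> R) i' := \sum_i fm_row a i' i * F i.
have sum_comb l' (F : I -> R) :
    \sum_i' l' i' * comb F i' = \sum_i (\sum_i' l' i' * fm_row a i' i) * F i.
  by rewrite -sum_bilinear.
case: (IH _ (fun i' j => comb (A^~ j) i') (comb b)) => [[x hx]|[l [hl0 hl hlb]]].
  pose r i := b i - \sum_(j < n) A i j * x j.
  have hr i' : 0 <= comb r i'.
    suff -> : comb r i' = comb b i' - \sum_(j < n) comb (A^~ j) i' * x j.
      by rewrite subr_ge0; exact: hx.
    rewrite /comb /r; under eq_bigr do rewrite mulrBr; rewrite sumrB.
    by congr (_ - _); rewrite /comb sum_bilinear.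
  have [t ht] : exists t, forall i, a i * t <= r i.
    apply: solve_one_variable.
    - by move=> i hi; have := hr (inl i); rewrite /comb fm_row_inl hi eqxx.
    - by move=> p k hp hk; have := hr (inr (p, k)); rewrite /comb fm_row_inr hp hk.
  left; exists (fun j => if j == n then t else x j) => i.
  rewrite big_ord_recr /= eqxx.
  under eq_bigr => j _ do rewrite ifN ?neq_ltn ?ltn_ord //.
  by have := ht i; rewrite /r /a; lra.
right; exists (fun i => \sum_i' l i' * fm_row a i' i); split.
- by move=> i; apply: sumr_ge0 => i' _; apply: mulr_ge0 => //; apply: fm_row_ge0.
- move=> j; rewrite ltnS leq_eqVlt => /orP[/eqP ->|hj]; rewrite -sum_comb.
    by rewrite big1 // => i' _; rewrite /comb fm_row_eliminates mulr0.
  exact: hl.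
- by rewrite -sum_comb.
Qed.

Definition lp_feasible (I J : finType) (A : I -> J -> R) (b : I -> R) (x : J -> R) :=
  forall i, \sum_j A i j * x j <= b i.

Definition lp_dual_feasible (I J : finType) (A : I -> J -> R) (c : J -> R) (y : I -> R) :=
  (forall i, 0 <= y i) /\ forall j, \sum_i y i * A i j = c j.

Lemma farkas (I J : finType) (A : I -> J -> R) (b : I -> R) :
  (exists x, lp_feasible A b x) \/
  (exists l : I -> R, [/\ forall i, 0 <= l i, forall j, \sum_i l i * A i j = 0
     & \sum_i l i * b i < 0]).
Proof.
pose A' i (k : nat) :=
  if (insub k : option 'I_#|J|) is Some k' then A i (enum_val k') else 0.
have eA i (k : 'I_#|J|) : A' i k = A i (enum_val k).
  rewrite /A'; case: insubP => [k' _ hk|]; last by rewrite ltn_ord.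
  by rewrite (val_inj hk).
case: (fourier_motzkin #|J| A' b) => [[x hx]|[l [hl0 hl hlb]]].
  left; exists (fun j => x (enum_rank j)) => i.
  rewrite (reindex (@enum_val J J)) /=; last exact/onW_bij/enum_val_bij.
  by under eq_bigr do rewrite enum_valK -eA; exact: hx.
right; exists l; split => // j; have := hl _ (ltn_ord (enum_rank j)).
by under eq_bigr do rewrite eA enum_rankK.
Qed.

Lemma farkas_eq (I J : finType) (A : I -> J -> R) (c : J -> R) :
  (exists y, lp_dual_feasible A c y) \/
  (exists x, (forall i, \sum_j A i j * x j <= 0) /\ 0 < \sum_j c j * x j).
Proof.
pose M (k : (I + J) + J) (i : I) : R := match k with
  | inl (inl i0) => if i == i0 then -1 else 0
  | inl (inr j) => A i j
  | inr j => - A i j end.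
pose rhs (k : (I + J) + J) : R := match k with
  | inl (inl i0) => 0 | inl (inr j) => c j | inr j => - c j end.
case: (farkas M rhs) => [[y hy]|[l [hl0 hl hlb]]].
  left; exists y; split.
    move=> i; have := hy (inl (inl i)).
    by rewrite /M /rhs sum_delta_mull mulN1r oppr_le0.
  move=> j; apply/le_anti/andP; split; first by rewrite sum_mulC; exact: hy (inl (inr j)).
  have := hy (inr j); rewrite /M /rhs.
  by under eq_bigr do rewrite mulNr; rewrite sumrN lerN2 sum_mulC.
right; pose g j := l (inr j) - l (inl (inr j)).
have sum_g (F : J -> R) :
    \sum_j F j * g j = \sum_j l (inr j) * F j - \sum_j l (inl (inr j)) * F j.
  by rewrite -sumrB; apply: eq_bigr => j _; rewrite /g; ring.
exists g; split.
  move=> i; have := hl i; rewrite !big_sumType /= /M sum_delta_mulr mulrN1.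
  under [X in _ + _ + X]eq_bigr do rewrite mulrN.
  by rewrite sumrN sum_g; have := hl0 (inl (inl i)); lra.
have := hlb; rewrite !big_sumType /= /rhs sum_mulr0 add0r.
by under [X in _ + X]eq_bigr do rewrite mulrN; rewrite sumrN sum_g; lra.
Qed.

Lemma weak_duality (I J : finType) (A : I -> J -> R) b c x y :
  lp_feasible A b x -> lp_dual_feasible A c y -> \sum_j c j * x j <= \sum_i y i * b i.
Proof.
move=> hx [hy0 hy]; under eq_bigr do rewrite -hy.
rewrite sum_bilinear; apply: ler_sum => i _; exact: ler_wpM2l.
Qed.

(* A Farkas certificate against the system "x primal feasible, y dual feasible,
   c.x >= b.y" would have these components; [t] is the weight of the last row. *)
Lemma duality_certificate_ge0 (I J : finType) (A : I -> J -> R) b c x0 y0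
    (l mu : I -> R) (g : J -> R) (t : R) :
  lp_feasible A b x0 -> lp_dual_feasible A c y0 ->
  (forall i, 0 <= l i) -> (forall i, 0 <= mu i) -> 0 <= t ->
  (forall j, \sum_i l i * A i j = t * c j) ->
  (forall i, \sum_j A i j * g j = mu i - t * b i) ->
  0 <= \sum_i l i * b i + \sum_j c j * g j.
Proof.
move=> hx0 [hy0 hyc] hl hmu ht hlA hAg.
have lmu_ge0 : 0 <= \sum_i l i * mu i by apply: sumr_ge0 => i _; exact: mulr_ge0.
case: (ltgtP 0 t) => [t_gt0|t_lt0|t0].
- have ct : t * (\sum_i l i * b i + \sum_j c j * g j) = \sum_i l i * mu i.
    rewrite mulrDr !big_distrr /=.
    under [X in _ + X]eq_bigr do rewrite mulrA -hlA.
    rewrite sum_bilinear -big_split; apply: eq_bigr => i _ /=.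
    by rewrite hAg; ring.
  by rewrite -(pmulr_rge0 _ t_gt0) ct.
- by move: ht; rewrite leNgt t_lt0.
- have hlb : 0 <= \sum_i l i * b i.
    apply: le_trans (_ : \sum_i l i * \sum_j A i j * x0 j <= _).
      by rewrite -sum_bilinear big1 // => j _; rewrite hlA -t0 !mul0r.
    by apply: ler_sum => i _; apply: ler_wpM2l.
  have hcg : 0 <= \sum_j c j * g j.
    under eq_bigr do rewrite -hyc.
    rewrite sum_bilinear; apply: sumr_ge0 => i _.
    by rewrite hAg -t0 mul0r subr0; exact: mulr_ge0.
  exact: addr_ge0.
Qed.

(* Rows [A x <= b], [- y <= 0], [y A <= c], [- y A <= - c] and
   [b.y - c.x <= 0] in the unknowns [(x, y)]. *)
Definition optimality_mat (I J : finType) (A : I -> J -> R) (b : I -> R) (c : J -> R)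
    (k : (((I + I) + J) + J) + 'I_1) (v : J + I) : R :=
  match k, v with
  | inl (inl (inl (inl i))), inl j => A i j
  | inl (inl (inl (inr i))), inr i' => if i' == i then -1 else 0
  | inl (inl (inr j)), inr i => A i j
  | inl (inr j), inr i => - A i j
  | inr _, inl j => - c j
  | inr _, inr i => b i
  | _, _ => 0 end.

Definition optimality_rhs (I J : finType) (b : I -> R) (c : J -> R)
    (k : (((I + I) + J) + J) + 'I_1) : R :=
  match k with
  | inl (inl (inl (inl i))) => b i
  | inl (inl (inr j)) => c j
  | inl (inr j) => - c j
  | _ => 0 end.

Lemma optimality_solution (I J : finType) (A : I -> J -> R) b c z :
  lp_feasible (optimality_mat A b c) (optimality_rhs b c) z ->
  [/\ lp_feasible A b (z \o inl), lp_dual_feasible A c (z \o inr)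
    & \sum_j c j * z (inl j) = \sum_i z (inr i) * b i].
Proof.
move=> hz; have hx : lp_feasible A b (z \o inl).
  by move=> i; have := hz (inl (inl (inl (inl i)))); rewrite big_sumType /= sum_mul0r addr0.
have hy : lp_dual_feasible A c (z \o inr).
  split=> [i|j] /=.
    have := hz (inl (inl (inl (inr i)))); rewrite big_sumType /= sum_mul0r add0r.
    by rewrite sum_delta_mull mulN1r oppr_le0.
  apply/le_anti/andP; split.
    have := hz (inl (inl (inr j))); rewrite big_sumType /= sum_mul0r add0r.
    by rewrite sum_mulC.
  have := hz (inl (inr j)); rewrite big_sumType /= sum_mul0r add0r.
  by under eq_bigr do rewrite mulNr; rewrite sumrN lerN2 sum_mulC.
split=> //; apply/le_anti; rewrite (weak_duality hx hy) /=.
have := hz (inr ord0); rewrite big_sumType /=.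
by under eq_bigr do rewrite mulNr; rewrite sumrN [X in _ + X]sum_mulC; lra.
Qed.

Lemma strong_duality (I J : finType) (A : I -> J -> R) b c x0 y0 :
  lp_feasible A b x0 -> lp_dual_feasible A c y0 ->
  exists x y, [/\ lp_feasible A b x, lp_dual_feasible A c y
    & \sum_j c j * x j = \sum_i y i * b i].
Proof.
move=> hx0 hy0.
case: (farkas (optimality_mat A b c) (optimality_rhs b c)) => [[z hz]|[l [hl0 hl hlb]]].
  by exists (z \o inl), (z \o inr); apply: optimality_solution.
pose l1 i := l (inl (inl (inl (inl i)))); pose mu i := l (inl (inl (inl (inr i)))).
pose g j := l (inl (inl (inr j))) - l (inl (inr j)); pose t := l (inr ord0).
have sum_g (F : J -> R) : \sum_j F j * g j =
    \sum_j l (inl (inl (inr j))) * F j - \sum_j l (inl (inr j)) * F j.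
  by rewrite -sumrB; apply: eq_bigr => j _; rewrite /g; ring.
have hlA j : \sum_i l1 i * A i j = t * c j.
  have := hl (inl j); rewrite !big_sumType big_ord1 /= !sum_mulr0 !addr0.
  by move/eqP; rewrite mulrN subr_eq0 => /eqP.
have hAg i : \sum_j A i j * g j = mu i - t * b i.
  have := hl (inr i); rewrite !big_sumType big_ord1 /= sum_mulr0 add0r.
  rewrite sum_delta_mulr mulrN1 sum_g.
  by under [X in _ + _ + X + _]eq_bigr do rewrite mulrN; rewrite sumrN /mu /t; lra.
have := duality_certificate_ge0 hx0 hy0 (fun i => hl0 _) (fun i => hl0 _) (hl0 _) hlA hAg.
move: hlb; rewrite !big_sumType big_ord1 /= !sum_mulr0 !mulr0 !addr0 sum_g.
by under [X in _ + X < _]eq_bigr do rewrite mulrN; rewrite sumrN /l1; lra.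
Qed.

End LinearProgramming.

Section UpSets.
Context {d : Order.disp_t} (L : finTBLatticeType d) {R : realFieldType}.

Lemma top_in_nupset (V : nupset L) : \top%O \in sval V.
Proof.
case: V => U /= /andP[/set0Pn[x hx] /forallP hU].
by have /forallP /(_ \top%O) /implyP := hU x; apply; rewrite hx lex1.
Qed.

Definition upset_indicator (V : nupset L) (x : L) : R := if x \in sval V then 1 else 0.

Lemma sum_upset_indicator_mulr (V : nupset L) (r : L -> R) :
  \sum_x upset_indicator V x * r x = \sum_(x in sval V) r x.
Proof.
rewrite [RHS]big_mkcond; apply: eq_bigr => x _; rewrite /upset_indicator.
by case: ifP => _; rewrite ?mul1r ?mul0r.
Qed.

Lemma sum_mul_upset_indicator (q : nupset L -> R) (x : L) :
  \sum_V q V * upset_indicator V x = \sum_(V : nupset L | x \in sval V) q V.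
Proof.
rewrite [RHS]big_mkcond; apply: eq_bigr => V _; rewrite /upset_indicator.
by case: ifP => _; rewrite ?mulr1 ?mulr0.
Qed.

(* Induction on [U] peels off the level set of the minimum [m] of [f] on [U]:
   [sum_U r f = f m * sum_U r + sum_{f > f m} r (f - f m)]. *)
Lemma layer_cake_le0 (r : L -> R) :
  (forall V : nupset L, \sum_(x in sval V) r x <= 0) ->
  forall (U : {set L}) (f : L -> R), is_upset U ->
  (forall x, x \in U -> 0 <= f x) ->
  (forall x y, x \in U -> (x <= y)%O -> f x <= f y) ->
  \sum_(x in U) r x * f x <= 0.
Proof.
move=> hV U; have [n] := ubnP #|U|; elim: n U => // n IH U hn f hU f0 fm.
case: (set_0Vmem U) => [->|[x0 hx0]]; first by rewrite big_set0.
have [m hm hmin] := arg_minP f hx0.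
pose U' := [set x in U | f m < f x]; pose f' x := f x - f m.
have hUne : (U != set0) && is_upset U by rewrite hU andbT; apply/set0Pn; exists x0.
have sumU : \sum_(x in U) r x <= 0 by exact: hV (exist _ U hUne).
have split_min : \sum_(x in U) r x * f x =
    \sum_(x in U') r x * f' x + f m * \sum_(x in U) r x.
  have -> : \sum_(x in U') r x * f' x = \sum_(x in U) r x * f' x.
    rewrite big_mkcond [RHS]big_mkcond; apply: eq_bigr => x _; rewrite inE.
    case xU: (x \in U) => //=; case: ltP => // hle.
    rewrite /f' (@le_anti _ _ (f x) (f m)) ?subrr ?mulr0 // hle; exact: hmin.
  rewrite big_distrr -big_split /=; apply: eq_bigr => x _; rewrite /f'; ring.
have ltU : (#|U'| < n)%N.
  suff ltUU : (#|U'| < #|U|)%N by rewrite ltnS in hn; exact: (@leq_trans _ _ _ ltUU hn).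
  apply: proper_card; apply/properP; split.
    by apply/subsetP => x; rewrite inE => /andP[].
  by exists m; [exact: hm | rewrite inE ltxx andbF].
have upU' : is_upset U'.
  apply/forallP => x; apply/forallP => y; apply/implyP; rewrite !inE.
  case/andP => /andP[xU fx] xy.
  have yU : y \in U by move/forallP: hU => /(_ x) /forallP /(_ y) /implyP; apply; rewrite xU.
  by rewrite yU (lt_le_trans fx (fm _ _ xU xy)).
have le1 : \sum_(x in U') r x * f' x <= 0.
  apply: (IH U' ltU f' upU') => [x|x y].
    by rewrite inE /f' subr_ge0 => /andP[_ /ltW].
  by rewrite inE /f' => /andP[xU _] xy; rewrite lerD2r; exact: fm.
have le2 : f m * \sum_(x in U) r x <= 0 by apply: mulr_ge0_le0 => //; exact: f0.
by rewrite split_min; apply: le_trans (lerD le1 le2) _; rewrite addr0.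
Qed.

(* The dual condition is [layer_cake_le0] with [f = phi]: a monotone
   nonnegative [phi] is the law of a random nonempty up-set. *)
Lemma random_upset_exists (phi : L -> R) :
  {homo phi : x y / (x <= y)%O >-> x <= y} -> (forall x, 0 <= phi x) ->
  exists q : nupset L -> R,
    (forall V, 0 <= q V) /\ forall x, \sum_(V : nupset L | x \in sval V) q V = phi x.
Proof.
move=> phi_mono phi_ge0.
case: (farkas_eq upset_indicator phi) => [[q [q0 hq]]|[r [hr hpos]]].
  by exists q; split => // x; rewrite -sum_mul_upset_indicator.
suff : \sum_(x in [set: L]) r x * phi x <= 0.
  rewrite (eq_bigl predT) => [|x]; last by rewrite inE.
  by rewrite sum_mulC leNgt hpos.
apply: layer_cake_le0.
- by move=> V; rewrite -sum_upset_indicator_mulr; exact: hr.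
- by apply/forallP => x; apply/forallP => y; rewrite !in_setT implybT.
- by move=> x _; exact: phi_ge0.
- by move=> x y _; exact: phi_mono.
Qed.

Lemma Sphi_max (phi : L -> R) (g : nupset L -> R) :
  {homo phi : x y / (x <= y)%O >-> x <= y} -> (forall x, 0 <= phi x) ->
  exists s, is_max (Sphi_values phi g) s.
Proof.
move=> phi_mono phi_ge0; have [q [q0 hq]] := random_upset_exists phi_mono phi_ge0.
have hq' : lp_dual_feasible upset_indicator phi q.
  by split => // x; rewrite sum_mul_upset_indicator.
pose M := \sum_V `|g V|.
have hx0 : lp_feasible upset_indicator g (fun x => if \top%O == x then - M else 0).
  move=> V; rewrite sum_delta_mulr /upset_indicator top_in_nupset mul1r.
  apply: (@le_trans _ _ (- `|g V|)); last by rewrite lerNl -normrN ler_norm.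
  by rewrite lerN2 /M (bigD1 V) //= lerDl; apply: sumr_ge0.
have [r [y [hr hy hval]]] := strong_duality hx0 hq'.
have feasibleE (r' : L -> R) :
    lp_feasible upset_indicator g r' <-> forall V : nupset L, \sum_(x in sval V) r' x <= g V.
  by split=> H V; have := H V; rewrite sum_upset_indicator_mulr.
exists (\sum_x r x * phi x); split.
  by exists r; split; [apply/feasibleE | rewrite sum_mulC].
move=> _ [r' [/feasibleE hr' ->]]; rewrite (sum_mulC r') (sum_mulC r) hval.
exact: weak_duality hr' hy.
Qed.

End UpSets.

Section Moebius.
Context {d : Order.disp_t} (L : finTBLatticeType d) {R : realFieldType}.
Implicit Types (psi f : L -> R).

Lemma iter_nablaE psi f s x : moebius_inverse psi f ->
  iter_nabla s psi x = \sum_(y | (y <= x)%O && all (fun a => ~~ (y <= a)%O) s) f y.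
Proof.
move=> hf; elim: s x => [|a s IH] x /=.
  by rewrite hf; apply: eq_bigl => y; rewrite andbT.
rewrite /nabla !IH [X in X - _](bigID (fun y => (y <= a)%O)) /=.
rewrite [X in _ - X](eq_bigl (fun y => ((y <= x)%O && all (fun b => ~~ (y <= b)%O) s)
                                      && (y <= a)%O)).
  rewrite addrAC subrr add0r; apply: eq_bigl => y.
  by case: (y <= x)%O; case: (y <= a)%O; rewrite ?andbT ?andbF.
by move=> y; rewrite lexI; case: (y <= x)%O; case: (y <= a)%O; rewrite ?andbT ?andbF.
Qed.

(* [f z] is the iterated difference of [psi] at [z] along all [a < z]. *)
Lemma moebius_inverse_ge0 psi f : moebius_inverse psi f ->
  completely_monotone psi -> forall z, 0 <= f z.
Proof.
move=> hf hcm z; have := hcm (enum [pred a | (a < z)%O]) z.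
rewrite (iter_nablaE _ _ hf) (big_pred1 z) // => y /=; apply/idP/idP.
  case/andP => yz /allP hall; apply/eqP; apply: contraTeq isT => yNz.
  have y_lt_z : (y < z)%O by rewrite lt_def eq_sym yNz yz.
  by have := hall y; rewrite mem_enum inE y_lt_z lexx => /(_ isT).
move/eqP => ->; rewrite lexx /=; apply/allP => a; rewrite mem_enum inE => az.
by apply/negP => za; have := lt_le_trans az za; rewrite ltxx.
Qed.

Lemma moebius_inverse_uniq (f1 f2 : L -> R) :
  (forall z, \sum_(y | (y <= z)%O) f1 y = \sum_(y | (y <= z)%O) f2 y) -> f1 =1 f2.
Proof.
move=> h y; have [n] := ubnP #|[set y' : L | (y' < y)%O]|.
elim: n y => // n IH y hn.
have := h y; rewrite (bigD1 y) // [X in _ = X](bigD1 y) //=.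
rewrite (eq_bigr f2) => [|y' /andP[y'y y'Ny]]; first by move/addIr.
have y'_lt_y : (y' < y)%O by rewrite lt_def eq_sym y'Ny y'y.
rewrite ltnS in hn; apply: IH; apply: (@leq_trans _ _ _ _ hn); apply: proper_card.
apply/properP; split; first by apply/subsetP => z; rewrite !inE => /lt_trans; apply.
by exists y'; rewrite !inE ?ltxx.
Qed.

End Moebius.

Section TransportProgram.
Context {d : Order.disp_t} (L : finTBLatticeType d) {R : realFieldType}.
Variables (phi fpsi : L -> R) (w : nupset L -> L -> R).

Definition transport_plan (p : nupset L -> L -> R) : Prop :=
  [/\ forall V y, 0 <= p V y, forall y, \sum_V p V y = fpsi y
    & forall x, \sum_(V : nupset L | x \in sval V) \sum_y p V y = phi x].

(* The program dual to the transport problem: its variables are [(g, h, r)],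
   its rows are [g V - h y <= - w V y] and [- g V + \sum_(x in V) r x <= 0],
   and its objective is [\sum_x phi x * r x - \sum_y fpsi y * h y]. *)
Definition tp_var := ((nupset L + L) + L)%type.
Definition tp_row := ((nupset L * L) + nupset L)%type.

Definition tp_mat (i : tp_row) (j : tp_var) : R := match i, j with
 | inl (V, y), inl (inl V') => if V' == V then 1 else 0
 | inl (V, y), inl (inr y') => if y' == y then -1 else 0
 | inr V, inl (inl V') => if V' == V then -1 else 0
 | inr V, inr x => upset_indicator V x
 | _, _ => 0 end.

Definition tp_rhs (i : tp_row) : R := if i is inl (V, y) then - w V y else 0.

Definition tp_obj (j : tp_var) : R := match j with
 | inl (inl _) => 0 | inl (inr y) => - fpsi y | inr x => phi x end.

Definition tp_pack (g : nupset L -> R) (h r : L -> R) (j : tp_var) : R :=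
  match j with inl (inl V) => g V | inl (inr y) => h y | inr x => r x end.

Definition tp_lift (p : nupset L -> L -> R) (i : tp_row) : R :=
  match i with inl (V, y) => p V y | inr V => \sum_y p V y end.

Lemma tp_feasibleP (z : tp_var -> R) :
  lp_feasible tp_mat tp_rhs z <->
  (forall V y, w V y <= z (inl (inr y)) - z (inl (inl V))) /\
  (forall V : nupset L, \sum_(x in sval V) z (inr x) <= z (inl (inl V))).
Proof.
have row_wE V y : \sum_j tp_mat (inl (V, y)) j * z j = z (inl (inl V)) - z (inl (inr y)).
  by rewrite !big_sumType /= sum_mul0r addr0 !sum_delta_mull mul1r mulN1r.
have row_gE V : \sum_j tp_mat (inr V) j * z j =
    - z (inl (inl V)) + \sum_(x in sval V) z (inr x).
  rewrite !big_sumType /= sum_mul0r addr0 sum_delta_mull mulN1r.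
  by rewrite sum_upset_indicator_mulr.
split=> [hz|[hw hg] [[V y]|V]].
  split=> [V y|V]; [have := hz (inl (V, y)) | have := hz (inr V)].
    by rewrite row_wE /=; lra.
  by rewrite row_gE /=; lra.
- by rewrite row_wE /=; have := hw V y; lra.
- by rewrite row_gE /=; have := hg V; lra.
Qed.

Lemma tp_obj_sum (z : tp_var -> R) : \sum_j tp_obj j * z j =
  \sum_x z (inr x) * phi x - psi_int fpsi (fun y => z (inl (inr y))).
Proof.
rewrite !big_sumType /= sum_mul0r add0r addrC sum_mulC; congr (_ + _).
by rewrite -sumrN; apply: eq_bigr => y _; rewrite mulNr.
Qed.

Lemma tp_rhs_sum (yv : tp_row -> R) : \sum_i yv i * tp_rhs i =
  - \sum_V \sum_y yv (inl (V, y)) * w V y.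
Proof.
rewrite big_sumType /= sum_mulr0 addr0 sum_pair -sumrN; apply: eq_bigr => V _.
by rewrite -sumrN; apply: eq_bigr => y _; rewrite mulrN.
Qed.

Lemma tp_col_g (yv : tp_row -> R) V :
  \sum_i yv i * tp_mat i (inl (inl V)) = \sum_y yv (inl (V, y)) - yv (inr V).
Proof.
rewrite big_sumType /= sum_pair /= sum_delta_mulr mulrN1; congr (_ - _).
by rewrite exchange_big; apply: eq_bigr => y _; rewrite sum_delta_mulr mulr1.
Qed.

Lemma tp_col_h (yv : tp_row -> R) y :
  \sum_i yv i * tp_mat i (inl (inr y)) = - \sum_V yv (inl (V, y)).
Proof.
rewrite big_sumType /= [X in _ + X]sum_mulr0 addr0 sum_pair /= -sumrN.
by apply: eq_bigr => V _; rewrite sum_delta_mulr mulrN1.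
Qed.

Lemma tp_col_r (yv : tp_row -> R) x :
  \sum_i yv i * tp_mat i (inr x) = \sum_(V : nupset L | x \in sval V) yv (inr V).
Proof.
rewrite big_sumType big1 => [|[V y] _]; last exact: mulr0.
by rewrite /= add0r (sum_mul_upset_indicator (fun V => yv (inr V))).
Qed.

Lemma tp_dual_feasible_lift p :
  transport_plan p -> lp_dual_feasible tp_mat tp_obj (tp_lift p).
Proof.
case=> p0 p_fpsi p_phi; split=> [[[V y]|V]|[[V|y]|x]] /=.
- exact: p0.
- by apply: sumr_ge0 => y _; exact: p0.
- by rewrite tp_col_g subrr.
- by rewrite tp_col_h p_fpsi.
- by rewrite tp_col_r.
Qed.

Lemma transport_plan_of_dual (yv : tp_row -> R) :
  lp_dual_feasible tp_mat tp_obj yv -> transport_plan (fun V y => yv (inl (V, y))).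
Proof.
case=> yv0 hcol; split=> [V y|y|x]; first exact: yv0.
  by have := hcol (inl (inr y)); rewrite tp_col_h => /oppr_inj.
have := hcol (inr x); rewrite tp_col_r /= => <-; apply: eq_bigr => V _.
by have /eqP := hcol (inl (inl V)); rewrite tp_col_g subr_eq0 => /eqP.
Qed.

Lemma transport_weak_duality p g h r :
  transport_plan p -> (forall V y, w V y <= h y - g V) ->
  (forall V : nupset L, \sum_(x in sval V) r x <= g V) ->
  \sum_V \sum_y p V y * w V y <= psi_int fpsi h - \sum_x r x * phi x.
Proof.
move=> hp hw hg.
have := weak_duality (proj2 (tp_feasibleP (tp_pack g h r)) (conj hw hg))
  (tp_dual_feasible_lift hp).
by rewrite tp_obj_sum tp_rhs_sum /=; lra.
Qed.

Lemma transport_plan_exists :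
  {homo phi : x y / (x <= y)%O >-> x <= y} -> (forall x, 0 <= phi x) -> phi \top%O = 1 ->
  (forall y, 0 <= fpsi y) -> \sum_y fpsi y = 1 -> exists p, transport_plan p.
Proof.
move=> phi_mono phi_ge0 phi_top fpsi_ge0 fpsi_sum.
have [q [q0 hq]] := random_upset_exists phi_mono phi_ge0.
have q_sum : \sum_V q V = 1.
  by rewrite -phi_top -hq; apply: eq_bigl => V; rewrite top_in_nupset.
exists (fun V y => q V * fpsi y); split=> [V y|y|x].
- exact: mulr_ge0.
- by rewrite -big_distrl /= q_sum mul1r.
- by rewrite -hq; apply: eq_bigr => V _; rewrite -big_distrr /= fpsi_sum mulr1.
Qed.

Lemma transport_strong_duality p0 : transport_plan p0 ->
  exists p g h r, [/\ transport_plan p, (forall V y, w V y <= h y - g V),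
    (forall V : nupset L, \sum_(x in sval V) r x <= g V)
  & psi_int fpsi h - \sum_x r x * phi x = \sum_V \sum_y p V y * w V y].
Proof.
move=> hp0; pose M := \sum_V \sum_y `|w V y|.
have hz0 : lp_feasible tp_mat tp_rhs (tp_pack (fun=> 0) (fun=> M) (fun=> 0)).
  apply/tp_feasibleP; split=> [V y|V] /=; last by rewrite big1.
  rewrite subr0; apply: le_trans (ler_norm _) _.
  rewrite /M (bigD1 V) //= (bigD1 y) //= -addrA lerDl.
  by apply: addr_ge0; apply: sumr_ge0 => *; [|apply: sumr_ge0 => *].
have [z [yv [hz hyv hval]]] := strong_duality hz0 (tp_dual_feasible_lift hp0).
have [hw hg] := proj1 (tp_feasibleP z) hz.
exists (fun V y => yv (inl (V, y))), (fun V => z (inl (inl V))),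
  (fun y => z (inl (inr y))), (fun x => z (inr x)); split => //.
  exact: transport_plan_of_dual.
by move: hval; rewrite tp_obj_sum tp_rhs_sum; lra.
Qed.

End TransportProgram.

Lemma capacity_ge0 {d : Order.disp_t} (L : finTBLatticeType d) {R : realFieldType}
  (c : L -> R) : capacity c -> forall x, 0 <= c x.
Proof. by case=> c_mono c_bot _ x; rewrite -c_bot; apply: c_mono; exact: le0x. Qed.

Section CouplingDuality.
Context {d : Order.disp_t} (L : finTBLatticeType d) {R : realFieldType}.
Variables (phi psi fpsi : L -> R) (w : nupset L -> L -> R).
Hypotheses (hphi : capacity phi) (hpsi : capacity psi)
  (hcm : completely_monotone psi) (hf : moebius_inverse psi fpsi).

Lemma sum_moebius_inverse : \sum_y fpsi y = 1.
Proof. by case: hpsi => _ _ <-; rewrite hf; apply: eq_bigl => y; rewrite lex1. Qed.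

Lemma coupling_transport_plan p : coupling phi psi p <-> transport_plan phi fpsi p.
Proof.
split=> [[p0 _ p_phi p_psi]|[p0 p_fpsi p_phi]].
  split=> //; apply: moebius_inverse_uniq => z.
  by rewrite -hf -p_psi exchange_big.
split=> // [|z]; rewrite exchange_big /=; under eq_bigr do rewrite p_fpsi.
  exact: sum_moebius_inverse.
by rewrite hf.
Qed.

Lemma coupling_le_S_value p u : coupling phi psi p -> S_values phi fpsi w u ->
  \sum_V \sum_y p V y * w V y <= u.
Proof.
move=> /coupling_transport_plan hp [g [h [s [hw [[[r [hr ->]] _] ->]]]]].
exact: transport_weak_duality.
Qed.

Lemma exists_coupling_S_value_le : exists p u,
  [/\ coupling phi psi p, S_values phi fpsi w u & u <= \sum_V \sum_y p V y * w V y].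
Proof.
have [phi_mono _ phi_top] := hphi; have phi_ge0 := capacity_ge0 hphi.
have [p0 hp0] := transport_plan_exists phi_mono phi_ge0 phi_top
  (moebius_inverse_ge0 hf hcm) sum_moebius_inverse.
have [p [g [h [r [hp hw hg hval]]]]] := transport_strong_duality w hp0.
have [s [hs s_max]] := Sphi_max g phi_mono phi_ge0.
exists p, (psi_int fpsi h - s); split.
- exact/coupling_transport_plan.
- by exists g, h, s.
- by rewrite -hval lerD2l lerN2; apply: s_max; exists r.
Qed.

End CouplingDuality.

Theorem theorem4p2 (d : Order.disp_t) (L : finTBLatticeType d) (R : realFieldType)
    (phi psi fpsi : L -> R)
    (hphi : capacity phi) (hpsi : capacity psi) (hcm : completely_monotone psi)
    (hf : moebius_inverse psi fpsi) (w : nupset L -> L -> R) :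
  (forall g : nupset L -> R, exists s, is_max (Sphi_values phi g) s) /\
  (exists v : R, is_max (B_values phi psi w) v /\ is_min (S_values phi fpsi w) v).
Proof.
have [phi_mono _ _] := hphi.
split=> [g|]; first exact: Sphi_max phi_mono (capacity_ge0 hphi).
have [p [u [hp hu hup]]] := exists_coupling_S_value_le w hphi hpsi hcm hf.
have B_le_S := coupling_le_S_value (phi := phi) (w := w) hpsi hf.
have pu : \sum_V \sum_y p V y * w V y = u by apply/le_anti; rewrite hup B_le_S.
exists u; split; split => //.
- by exists p.
- by move=> _ [p' [hp' ->]]; exact: B_le_S.
- by move=> u' hu'; rewrite -pu; exact: B_le_S.
Qed.
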